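(* Let $A$ be a skew brace and endow $\mathrm{Spec}\,A$ with the spectral topology. Then every irreducible closed subset of $\mathrm{Spec}\,A$ has a unique generic point.
   Context: A (left) skew brace is a triple $(A,+,\circ)$ where $(A,+)$ and $(A,\circ)$ are groups (not necessarily abelian) such that $a\circ(b+c)=a\circ b-a+a\circ c$ for all $a,b,c\in A$; the two groups share an identity element $e$. For $a\in A$ put $\lambda_a(b)=-a+a\circ b$ and define $a*b=-a+a\circ b-b$. An ideal of $A$ is a subset $I$ that is a normal subgroup of both $(A,+)$ and $(A,\circ)$ with $\lambda_a(I)\subseteq I$ for all $a\in A$. For subsets $I,J\subseteq A$ write $I*J=\{i*j\mid i\in I,j\in J\}$. A prime ideal of $A$ is a proper ideal $P\neq A$ such that for any subsets $I,J$ of $A$, $I*J\subseteq P$ implies $I\subseteq P$ or $J\subseteq P$. $\mathrm{Spec}\,A$ is the set of prime ideals of $A$. For an ideal $I$ let $H(I)=\{P\in\mathrm{Spec}\,A\mid I\subseteq P\}$; the spectral topology on $\mathrm{Spec}\,A$ is the topology whose closed sets are the sets $H(I)$, $I$ an ideal of $A$. A closed subset $S$ of a topological space is irreducible if $S$ is not the union of two closed subsets $S_1,S_2\subsetneq S$. A point $x\in S$ is a generic point of the closed set $S$ if $S=\mathrm{cl}(\{x\})$. *)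

(* skew braces on an arbitrary (possibly infinite) carrier type.
   Subsets of A are predicates A -> Prop; Spec A is a set of such predicates. *)

Record skew_brace := SkewBrace {
  carrier :> Type;
  add : carrier -> carrier -> carrier;
  opp : carrier -> carrier;
  zero : carrier;            (* common identity e of (A,+) and (A,o) *)
  circ : carrier -> carrier -> carrier;
  cinv : carrier -> carrier;
  addA : forall a b c, add a (add b c) = add (add a b) c;
  add0l : forall a, add zero a = a;
  add0r : forall a, add a zero = a;
  addNl : forall a, add (opp a) a = zero;
  addNr : forall a, add a (opp a) = zero;
  circA : forall a b c, circ a (circ b c) = circ (circ a b) c;
  circ0l : forall a, circ zero a = a;
  circ0r : forall a, circ a zero = a;
  circVl : forall a, circ (cinv a) a = zero;
  circVr : forall a, circ a (cinv a) = zero;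
  brace_comp : forall a b c,
    circ a (add b c) = add (add (circ a b) (opp a)) (circ a c)
}.

Section SkewBraceDefs.
Variable A : skew_brace.

Definition lam (a b : A) : A := add A (opp A a) (circ A a b).
Definition star (a b : A) : A := add A (add A (opp A a) (circ A a b)) (opp A b).

Definition subset (I J : A -> Prop) : Prop := forall x, I x -> J x.

Definition normal_add (I : A -> Prop) : Prop :=
  I (zero A) /\ (forall x y, I x -> I y -> I (add A x y)) /\
  (forall x, I x -> I (opp A x)) /\
  (forall a x, I x -> I (add A (add A a x) (opp A a))).

Definition normal_circ (I : A -> Prop) : Prop :=
  I (zero A) /\ (forall x y, I x -> I y -> I (circ A x y)) /\
  (forall x, I x -> I (cinv A x)) /\
  (forall a x, I x -> I (circ A (circ A a x) (cinv A a))).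

Definition is_ideal (I : A -> Prop) : Prop :=
  normal_add I /\ normal_circ I /\ (forall a x, I x -> I (lam a x)).

Definition star_sub (I J P : A -> Prop) : Prop :=
  forall i j, I i -> J j -> P (star i j).

Definition is_prime (P : A -> Prop) : Prop :=
  is_ideal P /\ (exists a, ~ P a) /\
  (forall I J : A -> Prop, star_sub I J P -> subset I P \/ subset J P).

Definition Hset (I : A -> Prop) : (A -> Prop) -> Prop :=
  fun P => is_prime P /\ subset I P.

Definition closed (S : (A -> Prop) -> Prop) : Prop :=
  exists I, is_ideal I /\ (forall P, S P <-> Hset I P).

Definition proper_subset (S1 S : (A -> Prop) -> Prop) : Prop :=
  (forall P, S1 P -> S P) /\ exists P, S P /\ ~ S1 P.

(* irreducible closed set (nonempty, by the standard convention) *)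
Definition irreducible (S : (A -> Prop) -> Prop) : Prop :=
  closed S /\ (exists P, S P) /\
  ~ (exists S1 S2, closed S1 /\ closed S2 /\
       proper_subset S1 S /\ proper_subset S2 S /\
       (forall P, S P <-> S1 P \/ S2 P)).

Definition closure (X : (A -> Prop) -> Prop) : (A -> Prop) -> Prop :=
  fun P => forall C, closed C -> (forall Q, X Q -> C Q) -> C P.

Definition generic_point (S : (A -> Prop) -> Prop) (x : A -> Prop) : Prop :=
  S x /\ (forall P, S P <-> closure (fun Q => Q = x) P).

End SkewBraceDefs.

From Stdlib Require Import Classical FunctionalExtensionality PropExtensionality.

(* The candidate generic point of an irreducible closed set S = H(I) is the
   intersection P0 of all primes in S.  It is an ideal containing I; it is prime
   because if I' * J' lies in P0 with I', J' not contained in P0, every prime of S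
   contains I' or J', so S is the union of the two proper closed subsets
   H(<I, I'>) and H(<I, J'>).  Hence P0 lies in S and its closure H(P0) is S.
   Uniqueness holds because the closure of a prime P is H(P), so two generic
   points contain each other. *)

Section SkewBraceSpectrum.
Variable A : skew_brace.

Definition bigcap (F : (A -> Prop) -> Prop) : A -> Prop :=
  fun a => forall K, F K -> K a.

Definition setU (X Y : A -> Prop) : A -> Prop := fun a => X a \/ Y a.

Definition ideal_span (X : A -> Prop) : A -> Prop :=
  bigcap (fun K => is_ideal A K /\ subset A X K).

Lemma bigcap_subset F P : F P -> subset A (bigcap F) P.
Proof. intros HP a Ha. exact (Ha P HP). Qed.

Lemma is_ideal_bigcap F :
  (forall K, F K -> is_ideal A K) -> is_ideal A (bigcap F).
Proof.
  intros HF. unfold bigcap.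
  (* [auto] cannot instantiate the membership hypotheses [forall K', F K' -> K' x]
     by higher-order unification, so they are specialized to [K] by hand. *)
  repeat split; intros;
  match goal with HK : F ?K |- _ =>
    destruct (HF K HK) as [[? [? [? ?]]] [[? [? [? ?]]] ?]];
    repeat match goal with Hz : forall K', F K' -> K' _ |- _ => specialize (Hz K HK) end
  end; auto.
Qed.

Lemma is_ideal_span X : is_ideal A (ideal_span X).
Proof. apply is_ideal_bigcap. intros K [HK _]. exact HK. Qed.

Lemma span_subset_ideal X P :
  is_ideal A P -> (subset A (ideal_span X) P <-> subset A X P).
Proof.
  intros HP; split; intros H a Ha.
  - apply H. intros K [_ HXK]. exact (HXK a Ha).
  - exact (Ha P (conj HP H)).
Qed.

Lemma Hset_span X P : Hset A (ideal_span X) P <-> is_prime A P /\ subset A X P.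
Proof.
  split; intros [Hprime Hsub]; split; try exact Hprime;
    apply (span_subset_ideal X P (proj1 Hprime)); exact Hsub.
Qed.

Lemma closed_Hset I : is_ideal A I -> closed A (Hset A I).
Proof. intros HI. exists I. split; [exact HI | tauto]. Qed.

Lemma closed_prime S P : closed A S -> S P -> is_prime A P.
Proof. intros [I [_ HS]] HP. apply HS in HP. apply HP. Qed.

Lemma closure_prime x P :
  is_prime A x -> (closure A (fun Q => Q = x) P <-> Hset A x P).
Proof.
  intros Hx; split.
  - intros Hcl. apply Hcl.
    + apply closed_Hset, Hx.
    + intros Q ->. split; [exact Hx | intros a Ha; exact Ha].
  - intros [HP Hsub] C [J [_ HC]] Hxin.
    destruct (proj1 (HC x) (Hxin x eq_refl)) as [_ HJx].
    apply HC. split; [exact HP |]. intros a Ha. exact (Hsub a (HJx a Ha)).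
Qed.

Lemma generic_point_unique S x y :
  closed A S -> generic_point A S x -> generic_point A S y -> x = y.
Proof.
  intros HS [Sx Gx] [Sy Gy].
  pose proof (proj1 (closure_prime x y (closed_prime S x HS Sx)) (proj1 (Gx y) Sy)) as Hxy.
  pose proof (proj1 (closure_prime y x (closed_prime S y HS Sy)) (proj1 (Gy x) Sx)) as Hyx.
  apply functional_extensionality. intros a.
  apply propositional_extensionality. split; [apply (proj2 Hxy) | apply (proj2 Hyx)].
Qed.

Section ClosedSet.
Variables (S : (A -> Prop) -> Prop) (I : A -> Prop).
Hypothesis S_def : forall P, S P <-> Hset A I P.

Lemma S_prime P : S P -> is_prime A P.
Proof. intros HP. apply S_def in HP. apply HP. Qed.

Lemma S_contains P : S P -> subset A I P.
Proof. intros HP. apply S_def in HP. apply HP. Qed.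

Lemma S_upward P Q : S P -> is_prime A Q -> subset A P Q -> S Q.
Proof.
  intros HP HQ HPQ. apply S_def. split; [exact HQ |].
  intros a Ha. exact (HPQ a (S_contains P HP a Ha)).
Qed.

Lemma S_bigcap : is_prime A (bigcap S) -> S (bigcap S).
Proof.
  intros Hprime. apply S_def. split; [exact Hprime |].
  intros a Ha P HP. exact (S_contains P HP a Ha).
Qed.

Lemma generic_point_bigcap :
  is_prime A (bigcap S) -> generic_point A S (bigcap S).
Proof.
  intros Hprime. split; [exact (S_bigcap Hprime) |]. intros P.
  rewrite (closure_prime _ P Hprime). split.
  - intros HP. split; [exact (S_prime P HP) | exact (bigcap_subset S P HP)].
  - intros [HP Hsub]. exact (S_upward _ P (S_bigcap Hprime) HP Hsub).
Qed.

Lemma Hset_spanU K P : Hset A (ideal_span (setU I K)) P <-> S P /\ subset A K P.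
Proof.
  rewrite Hset_span, S_def. split.
  - intros [Hprime Hsub]. split; [split; [exact Hprime |] |];
      intros a Ha; apply Hsub; [left | right]; exact Ha.
  - intros [[Hprime HI] HK]. split; [exact Hprime |]. intros a [Ha | Ha]; auto.
Qed.

Lemma Hset_spanU_proper K :
  ~ subset A K (bigcap S) -> proper_subset A (Hset A (ideal_span (setU I K))) S.
Proof.
  intros HK. split; [intros P HP; exact (proj1 (proj1 (Hset_spanU K P) HP)) |].
  apply not_all_ex_not in HK as [a HKa].
  apply imply_to_and in HKa as [Ka Hnot].
  apply not_all_ex_not in Hnot as [P HP].
  apply imply_to_and in HP as [SP HPa].
  exists P. split; [exact SP |].
  intros H. exact (HPa (proj2 (proj1 (Hset_spanU K P) H) a Ka)).
Qed.

Lemma S_splits I' J' P :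
  star_sub A I' J' (bigcap S) ->
  S P <-> Hset A (ideal_span (setU I I')) P \/ Hset A (ideal_span (setU I J')) P.
Proof.
  intros Hstar. rewrite !Hset_spanU. split.
  - intros HP. destruct (S_prime P HP) as [_ [_ Hsplit]].
    assert (HstarP : star_sub A I' J' P).
    { intros i j Hi Hj. exact (Hstar i j Hi Hj P HP). }
    destruct (Hsplit I' J' HstarP); [left | right]; split; assumption.
  - intros [[HP _] | [HP _]]; exact HP.
Qed.

Lemma prime_bigcap : irreducible A S -> is_prime A (bigcap S).
Proof.
  intros [_ [[P1 SP1] Hirr]]. split; [| split].
  - apply is_ideal_bigcap. intros K HK. exact (proj1 (S_prime K HK)).
  - destruct (S_prime P1 SP1) as [_ [[a Ha] _]].
    exists a. intros H. exact (Ha (H P1 SP1)).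
  - intros I' J' Hstar.
    destruct (classic (subset A I' (bigcap S))) as [HI' | HI']; [left; exact HI' |].
    destruct (classic (subset A J' (bigcap S))) as [HJ' | HJ']; [right; exact HJ' |].
    exfalso. apply Hirr.
    exists (Hset A (ideal_span (setU I I'))), (Hset A (ideal_span (setU I J'))).
    split; [apply closed_Hset, is_ideal_span |].
    split; [apply closed_Hset, is_ideal_span |].
    split; [exact (Hset_spanU_proper I' HI') |].
    split; [exact (Hset_spanU_proper J' HJ') |].
    intros P. exact (S_splits I' J' P Hstar).
Qed.

End ClosedSet.
End SkewBraceSpectrum.

Theorem theorem4p11 (A : skew_brace) (S : (A -> Prop) -> Prop) :
  irreducible A S -> exists! x : A -> Prop, generic_point A S x.
Proof.
  intros Hirr. destruct (proj1 Hirr) as [I [_ S_def]].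
  pose proof (generic_point_bigcap A S I S_def (prime_bigcap A S I S_def Hirr))
    as Hgeneric.
  exists (bigcap A S). split; [exact Hgeneric |].
  intros y Gy. exact (generic_point_unique A S _ y (proj1 Hirr) Hgeneric Gy).
Qed.
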